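(* Let $P,Q,R\in W^{(l)}\setminus\{0\}$ with $[P,Q]_{\rho,\sigma}=\ell_{\rho,\sigma}(R)$, where $(\rho,\sigma)\in\mathfrak V$ and $\sigma\le0$. (1) If $\mathrm{st}_{\rho,\sigma}(P)$ and $\mathrm{st}_{\rho,\sigma}(Q)$ are not aligned, then $\mathrm{st}_{\rho,\sigma}(P)+\mathrm{st}_{\rho,\sigma}(Q)-(1,1)=\mathrm{st}_{\rho,\sigma}(R)$. (2) If $\mathrm{en}_{\rho,\sigma}(P)$ and $\mathrm{en}_{\rho,\sigma}(Q)$ are not aligned, then $\mathrm{en}_{\rho,\sigma}(P)+\mathrm{en}_{\rho,\sigma}(Q)-(1,1)=\mathrm{en}_{\rho,\sigma}(R)$.
   Context: $K$ is a field of characteristic zero, $l\in\mathbb{N}$. $W^{(l)}$ is the associative $K$-algebra with $K$-basis $\{X^{i/l}Y^j:i\in\mathbb{Z},j\in\mathbb{N}_0\}$, powers of $X$ multiplying as Laurent monomials and $[Y,X^\alpha]=\alpha X^{\alpha-1}$ for $\alpha\in\frac1l\mathbb{Z}$. $\Psi^{(l)}(X^{i/l}Y^j)=x^{i/l}y^j\in K[x^{\pm1/l},y]$ ($K$-linear); supports are sets of exponents with nonzero coefficient. $\mathfrak V=\{(\rho,\sigma)\in\mathbb{Z}^2:\gcd(\rho,\sigma)=1,\rho+\sigma>0\}$. For $P\ne0$, $v_{\rho,\sigma}(P)=\max\{\rho a+\sigma b:(a,b)\in\mathrm{Supp}(P)\}$, $\ell_{\rho,\sigma}(P)$ = sum of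 terms of $\Psi^{(l)}(P)$ attaining it. $\mathrm{st}_{\rho,\sigma}(P)$: among points $(a,b)\in\mathrm{Supp}(\ell_{\rho,\sigma}(P))$ maximizing $a-b$, the one with largest $a$; $\mathrm{en}_{\rho,\sigma}(P)$: among those maximizing $b-a$, the one with largest $b$. $[P,Q]_{\rho,\sigma}:=0$ if $[P,Q]=0$ or $v_{\rho,\sigma}([P,Q])<v_{\rho,\sigma}(P)+v_{\rho,\sigma}(Q)-(\rho+\sigma)$, and $:=\ell_{\rho,\sigma}([P,Q])$ otherwise. Vectors $(a_1,a_2),(b_1,b_2)$ are aligned if $a_1b_2-a_2b_1=0$. *)

From mathcomp Require Import all_boot all_order all_algebra.
Set Implicit Arguments. Unset Strict Implicit. Unset Printing Implicit Defensive.
Import Order.TTheory GRing.Theory Num.Theory.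
Local Open Scope ring_scope.

(* An element of W^(l) is represented by a formal finite sum, i.e. a list of
   monomials (i, j, c) standing for c * X^(i/l) Y^j.  All notions below
   (Psi, support, v, ell, st, en, [_,_]_{rho,sigma}) depend only on the
   coefficient function Psi, so they are well defined on W^(l). *)
Section Weyl.
Variable K : fieldType.
Variable l : nat.

Definition mono := (int * nat * K)%type.
Definition Wl := seq mono.

Definition expo (m : mono) : rat * rat := ((m.1.1)%:~R / l%:R, (m.1.2)%:R).

Definition psi (P : Wl) (a b : rat) : K :=
  \sum_(m <- P | expo m == (a, b)) m.2.

Definition supp (P : Wl) : seq (rat * rat) :=
  undup [seq expo m | m <- P & psi P (expo m).1 (expo m).2 != 0].

Definition ff (i : int) (k : nat) : K := \prod_(t < k) (i%:~R / l%:R - t%:R).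

(* (c1 X^(i1/l) Y^j1)(c2 X^(i2/l) Y^j2)
     = sum_k C(j1,k) (i2/l)_k c1 c2 X^((i1+i2-kl)/l) Y^(j1-k+j2),
   which is the product forced by [Y, X^a] = a X^(a-1). *)
Definition mulm (m1 m2 : mono) : Wl :=
  [seq ((m1.1.1 + m2.1.1 - (k * l)%N%:Z)%R, (m1.1.2 - k + m2.1.2)%N,
        m1.2 * m2.2 * ('C(m1.1.2, k))%:R * ff m2.1.1 k) | k <- iota 0 (m1.1.2).+1].

Definition mulW (P Q : Wl) : Wl := flatten [seq mulm m1 m2 | m1 <- P, m2 <- Q].
Definition oppW (P : Wl) : Wl := [seq (m.1, - m.2) | m <- P].
Definition commW (P Q : Wl) : Wl := mulW P Q ++ oppW (mulW Q P).

Variables rho sigma : int.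

Definition wt (p : rat * rat) : rat := rho%:~R * p.1 + sigma%:~R * p.2.

(* v_{rho,sigma}(P) (meaningful for P <> 0) *)
Definition vval (P : Wl) : rat :=
  match supp P with
  | [::] => 0
  | p :: s => foldr (fun q acc => Num.max (wt q) acc) (wt p) s
  end.

(* ell_{rho,sigma}(P), as a coefficient function of K[x^{+-1/l}, y] *)
Definition ell (P : Wl) (a b : rat) : K :=
  if wt (a, b) == vval P then psi P a b else 0.

Definition supp_ell (P : Wl) : seq (rat * rat) :=
  [seq p <- supp P | wt p == vval P].

Definition better_st (p q : rat * rat) : bool :=
  (q.1 - q.2 < p.1 - p.2) || ((q.1 - q.2 == p.1 - p.2) && (q.1 < p.1)).
Definition better_en (p q : rat * rat) : bool :=
  (q.2 - q.1 < p.2 - p.1) || ((q.2 - q.1 == p.2 - p.1) && (q.2 < p.2)).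

Definition pick_best (better : rat * rat -> rat * rat -> bool) (s : seq (rat * rat)) :=
  foldr (fun p acc => if better p acc then p else acc) (head (0, 0) s) s.

Definition st (P : Wl) : rat * rat := pick_best better_st (supp_ell P).
Definition en (P : Wl) : rat * rat := pick_best better_en (supp_ell P).

Definition brk (P Q : Wl) (a b : rat) : K :=
  let C := commW P Q in
  if (supp C == [::]) || (vval C < vval P + vval Q - (rho + sigma)%:~R) then 0
  else ell C a b.

End Weyl.

Definition aligned (p q : rat * rat) : bool := p.1 * q.2 - p.2 * q.1 == 0.

Definition inV (rho sigma : int) : bool := coprimez rho sigma && (0 < rho + sigma).

From mathcomp Require Import all_boot all_order all_algebra.
From mathcomp Require Import ring lra.
Import Order.TTheory GRing.Theory Num.Theory.
Local Open Scope ring_scope.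

(* Write a monomial of W^(l) as c X^e with e = (i, j) and exponent
   pt e = (i/l, j).  Moving Y's past X's, X^e1 X^e2 equals X^(e1+e2) plus
   j1 (i2/l) X^(e1+e2-(1,1)) plus terms of exponents e1+e2-(k,k), k >= 2, whose
   weight is at least 2(rho+sigma) lower.  In [P,Q] the X^(e1+e2) terms cancel,
   so the part of weight v(P)+v(Q)-(rho+sigma) comes only from pairs of leading
   monomials, each pair giving its shifted sum with coefficient
   det(e1,e2) = j1 (i2/l) - j2 (i1/l).
   Order points by a-b and then a (for st), or b-a and then b (for en).  This
   order is additive for the shifted sum and separates the points of a line of
   constant weight, so the maximal point of the top part of [P,Q] comes only
   from the pair (st P, st Q) (resp. (en P, en Q)); its coefficient is
   nonzero in characteristic zero exactly when the two points are not aligned. *)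

Lemma sumr_neq0_has (V : zmodType) (I : Type) (r : seq I) (F : I -> V) :
  \sum_(i <- r) F i != 0 -> has (fun i => F i != 0) r.
Proof.
elim: r => [|i r IH]; first by rewrite big_nil eqxx.
by rewrite big_cons /=; have [->|] := eqVneq (F i) 0; rewrite ?add0r.
Qed.

Lemma foldr_max_spec (T : eqType) (w : T -> rat) (x : T) (s : seq T) :
  let m := foldr (fun q acc => Num.max (w q) acc) (w x) s in
  (forall q, q \in x :: s -> w q <= m) /\ exists2 q, q \in x :: s & w q = m.
Proof.
elim: s => [|y s [IH1 [q hq IH2]]] /=.
  by split; [move=> q; rewrite inE => /eqP -> | exists x; rewrite ?inE].
split.
  move=> z; rewrite !inE le_max => /or3P [/eqP->|/eqP ->|hz].
  - by rewrite orbC IH1 ?inE ?eqxx.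
  - by rewrite lexx.
  - by rewrite orbC IH1 ?inE ?hz ?orbT.
rewrite maxEle; case: ifP => _; last by exists y; rewrite ?inE ?eqxx ?orbT.
by exists q => //; move: hq; rewrite !inE => /orP [->|->]; rewrite ?orbT.
Qed.

Section LexOrder.
Variables f g : rat * rat -> rat.
Hypothesis fg_inj : forall x y, f x = f y -> g x = g y -> x = y.

Definition better_lex (p q : rat * rat) : bool :=
  (f q < f p) || ((f q == f p) && (g q < g p)).

Lemma better_lex_trans x y z : better_lex x y -> better_lex y z -> better_lex x z.
Proof.
rewrite /better_lex => /orP [h|/andP [/eqP e h]] /orP [h'|/andP [/eqP e' h']].
- by rewrite (lt_trans h' h).
- by rewrite e' h.
- by rewrite -e h'.
- by rewrite e' e eqxx (lt_trans h' h) orbT.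
Qed.

Lemma better_lex_total x y : x != y -> better_lex x y || better_lex y x.
Proof.
move=> hxy; rewrite /better_lex.
case: (ltgtP (f x) (f y)) => hf; rewrite ?orbT // ?hf ?eqxx /=.
case: (ltgtP (g x) (g y)) => hg; rewrite ?orbT //.
by move: hxy; rewrite (fg_inj _ _ hf hg) eqxx.
Qed.

Lemma better_lex_le x y : better_lex x y -> f y <= f x.
Proof. by rewrite /better_lex => /orP [/ltW //|/andP [/eqP -> _]]. Qed.

Lemma foldr_better_spec x s :
  let r := foldr (fun p acc => if better_lex p acc then p else acc) x s in
  r \in x :: s /\ forall q, q \in x :: s -> r = q \/ better_lex r q.
Proof.
elim: s => [|y s [IH1 IH]] /=.
  by split; [rewrite inE | move=> q; rewrite inE => /eqP ->; left].
set r := foldr _ x s in IH1 IH *.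
case: ifP => hb.
  have better_y q : q \in x :: s -> better_lex y q.
    by case/IH => [<- //|]; exact: better_lex_trans.
  split=> [|q]; first by rewrite !inE eqxx orbT.
  rewrite !inE => /or3P [/eqP->|/eqP->|hq]; [|by left|].
  - by right; apply: better_y; rewrite mem_head.
  - by right; apply: better_y; rewrite inE hq orbT.
split; first by move: IH1; rewrite !inE => /orP [->|->]; rewrite ?orbT.
move=> q; rewrite !inE => /or3P [/eqP->|/eqP->|hq].
- by apply: IH; rewrite inE eqxx.
- have [->|hne] := eqVneq r y; first by left.
  by right; move: (better_lex_total _ _ hne); rewrite hb orbF.
- by apply: IH; rewrite inE hq orbT.
Qed.

Lemma pick_best_spec s : s != [::] ->
  pick_best better_lex s \in s /\
  forall q, q \in s ->
    pick_best better_lex s = q \/ better_lex (pick_best better_lex s) q.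
Proof.
case: s => // x s _; rewrite /pick_best -[head _ _]/x.
have [h1 h2] := foldr_better_spec x (x :: s).
split=> [|q hq]; last by apply: h2; rewrite inE hq orbT.
by move: h1; rewrite inE => /orP [/eqP ->|//]; rewrite mem_head.
Qed.

End LexOrder.

Section Coefficients.
Variable K : fieldType.
Hypothesis hK : [pchar K] =i pred0.
Variable l : nat.
Hypothesis hl : (0 < l)%N.

Definition key := (int * nat)%type.
Definition pt (e : key) : rat * rat := (e.1%:~R / l%:R, e.2%:R).
Definition coef (P : Wl K) (e : key) : K := \sum_(m <- P | m.1 == e) m.2.
Definition keys (P : Wl K) : seq key := undup (map fst P).

Lemma natl_neq0 (F : fieldType) : [pchar F] =i pred0 -> (l%:R : F) != 0.
Proof. by move/pcharf0P => ->; rewrite -lt0n. Qed.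

Lemma pt_inj : injective pt.
Proof.
have lQ : (l%:R : rat) != 0 by rewrite pnatr_eq0 -lt0n.
move=> [i j] [i' j'] [/(congr1 ( *%R^~ l%:R))] /=.
rewrite !divfK // => /eqP; rewrite eqr_int => /eqP -> /eqP.
by rewrite eqr_nat => /eqP ->.
Qed.

Lemma psi_pt (P : Wl K) (e : key) : psi l P (pt e).1 (pt e).2 = coef P e.
Proof.
rewrite /psi /coef; apply: eq_bigl => m.
by rewrite /expo -/(pt m.1) -surjective_pairing (inj_eq pt_inj).
Qed.

Lemma sum_coef_keys (P : Wl K) (F : key -> K) :
  \sum_(m <- P) m.2 * F m.1 = \sum_(e <- keys P) coef P e * F e.
Proof.
transitivity (\sum_(e <- keys P) \sum_(m <- P) (if m.1 == e then m.2 * F m.1 else 0)).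
  rewrite exchange_big /= [LHS]big_seq [RHS]big_seq; apply: eq_bigr => m hm.
  rewrite (bigD1_seq m.1) ?undup_uniq ?mem_undup ?map_f //= eqxx.
  by rewrite big1_seq ?addr0 // => e /andP [he _]; rewrite eq_sym (negbTE he).
apply: eq_bigr => e _; rewrite /coef big_distrl /= big_mkcond [RHS]big_mkcond.
by apply: eq_bigr => m _; case: eqP => // ->.
Qed.

Definition mulm_key (e1 e2 : key) (k : nat) : key :=
  ((e1.1 + e2.1 - (k * l)%N%:Z)%R, (e1.2 - k + e2.2)%N).

Definition mul_coef (e1 e2 : key) (p : rat * rat) : K :=
  \sum_(k <- iota 0 (e1.2).+1 | pt (mulm_key e1 e2 k) == p)
     ('C(e1.2, k))%:R * ff K l e2.1 k.

Lemma psi_mulm (m1 m2 : mono K) (p : rat * rat) :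
  psi l (mulm l m1 m2) p.1 p.2 = m1.2 * m2.2 * mul_coef m1.1 m2.1 p.
Proof.
rewrite /psi /mulm big_map /mul_coef big_distrr /= -surjective_pairing.
by apply: eq_bigr => k _; rewrite !mulrA.
Qed.

Lemma psi_mulW (P Q : Wl K) (p : rat * rat) : psi l (mulW l P Q) p.1 p.2 =
  \sum_(e1 <- keys P) \sum_(e2 <- keys Q) coef P e1 * coef Q e2 * mul_coef e1 e2 p.
Proof.
rewrite /mulW /psi big_flatten /= big_allpairs_dep /=.
under eq_bigr do under eq_bigr do rewrite -/(psi l _ p.1 p.2) psi_mulm.
transitivity (\sum_(m1 <- P) m1.2 * \sum_(e2 <- keys Q) coef Q e2 * mul_coef m1.1 e2 p).
  apply: eq_bigr => m1 _; rewrite -(sum_coef_keys Q (fun e2 => mul_coef m1.1 e2 p)).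
  by rewrite big_distrr; apply: eq_bigr => m2 _ /=; ring.
rewrite (sum_coef_keys P (fun e1 => \sum_(e2 <- keys Q) coef Q e2 * mul_coef e1 e2 p)).
by apply: eq_bigr => e1 _; rewrite big_distrr; apply: eq_bigr => e2 _ /=; ring.
Qed.

Lemma psi_commW (P Q : Wl K) (p : rat * rat) : psi l (commW l P Q) p.1 p.2 =
  \sum_(e1 <- keys P) \sum_(e2 <- keys Q)
    coef P e1 * coef Q e2 * (mul_coef e1 e2 p - mul_coef e2 e1 p).
Proof.
have -> : psi l (commW l P Q) p.1 p.2 =
          psi l (mulW l P Q) p.1 p.2 - psi l (mulW l Q P) p.1 p.2.
  by rewrite /psi big_cat big_map sumrN.
rewrite !psi_mulW [X in _ - X]exchange_big -sumrB.
by apply: eq_bigr => e1 _; rewrite -sumrB; apply: eq_bigr => e2 _; ring.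
Qed.

Lemma mem_supp (P : Wl K) (p : rat * rat) :
  (p \in supp l P) = (psi l P p.1 p.2 != 0).
Proof.
rewrite /supp mem_undup; apply/mapP/idP => [[m]|hp].
  by rewrite mem_filter => /andP [h _] ->.
have [m hm /eqP hmp] : exists2 m, m \in P & expo l m == p.
  apply/hasP; apply: contraNT hp => /hasPn hP.
  rewrite /psi big1_seq // => m /andP [+ hm].
  by rewrite -surjective_pairing => /eqP hmp; move: (hP m hm); rewrite hmp eqxx.
by exists m; rewrite // mem_filter hm hmp hp.
Qed.

Lemma intr_neq0_pchar0 (z : int) : z != 0 -> (z%:~R : K) != 0.
Proof.
have hn := (pcharf0P K).1 hK.
case: z => n hz; first by rewrite -[(Posz n)%:~R]/(n%:R) hn.
by rewrite NegzE mulrNz oppr_eq0 -[((n.+1)%:Z)%:~R]/((n.+1)%:R : K) hn.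
Qed.

Definition kdet (e1 e2 : key) : K :=
  e1.2%:R * (e2.1%:~R / l%:R) - e2.2%:R * (e1.1%:~R / l%:R).

Lemma kdet_neq0 (e1 e2 : key) : ~~ aligned (pt e1) (pt e2) -> kdet e1 e2 != 0.
Proof.
move=> hal; set z : int := e1.2%:Z * e2.1 - e2.2%:Z * e1.1.
have hz : z != 0.
  apply: contra hal => /eqP hz0; rewrite /aligned /pt /=.
  suff -> : e1.1%:~R / l%:R * e2.2%:R - e1.2%:R * (e2.1%:~R / l%:R) =
            - (z%:~R : rat) / l%:R by rewrite hz0 oppr0 mul0r.
  by rewrite /z intrB !intrM; field; rewrite pnatr_eq0 -lt0n.
suff -> : kdet e1 e2 = z%:~R / l%:R.
  by rewrite mulf_neq0 ?invr_eq0 ?intr_neq0_pchar0 ?natl_neq0.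
by rewrite /kdet /z intrB !intrM; field; exact: natl_neq0.
Qed.

Section Weight.
Variables rho sigma : int.
Hypothesis hc : 0 < rho + sigma.
Local Notation wt := (wt rho sigma).
Local Notation vval := (vval l rho sigma).
Local Notation supp_ell := (supp_ell l rho sigma).

Definition add_sub (x y : rat * rat) (t : rat) : rat * rat :=
  (x.1 + y.1 - t, x.2 + y.2 - t).

Definition wdiag : rat := (rho + sigma)%:~R.

Lemma wdiag_gt0 : 0 < wdiag. Proof. by rewrite ltr0z. Qed.

Lemma wt_add_sub x y t : wt (add_sub x y t) = wt x + wt y - t * wdiag.
Proof. by rewrite /wt /wdiag /= intrD; ring. Qed.

Lemma add_subC x y t : add_sub x y t = add_sub y x t.
Proof. by rewrite /add_sub (addrC x.1) (addrC x.2). Qed.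

Lemma pt_mulm (e1 e2 : key) (k : nat) : (k <= e1.2)%N ->
  pt (mulm_key e1 e2 k) = add_sub (pt e1) (pt e2) k%:R.
Proof.
move=> hk; rewrite /pt /mulm_key /add_sub /=; congr pair.
  by field; rewrite pnatr_eq0 -lt0n.
by rewrite natrD natrB //; ring.
Qed.

Lemma mul_coef_top (e1 e2 : key) p :
  wt (pt e1) + wt (pt e2) - wdiag <= wt p ->
  mul_coef e1 e2 p = (add_sub (pt e1) (pt e2) 0 == p)%:R
    + (add_sub (pt e1) (pt e2) 1 == p)%:R * (e1.2%:R * (e2.1%:~R / l%:R)).
Proof.
have ifR (b : bool) (x : K) : (if b then x else 0) = b%:R * x.
  by case: b; rewrite ?mul1r ?mul0r.
move=> hp; rewrite /mul_coef big_mkcond /=.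
case: e1 hp => i1 j1 hp /=; rewrite big_cons pt_mulm //= bin0 /ff big_ord0 mulr1.
rewrite ifR mulr1; congr (_ + _).
case: j1 hp => [|n] hp /=; first by rewrite big_nil mul0r mulr0.
rewrite big_cons pt_mulm //= bin1 big_ord1 subr0 ifR big1_seq ?addr0 //.
move=> k /andP [_]; rewrite mem_iota => /andP [k_ge2 k_le].
case: eqP => // hkp; exfalso; move: hp.
rewrite -hkp pt_mulm /=; last by move: k_le; rewrite add2n ltnS.
rewrite wt_add_sub; have : (2 : rat) <= k%:R by rewrite (ler_nat rat 2 k).
by have := wdiag_gt0; nra.
Qed.

Lemma mul_coef_commutator_top (e1 e2 : key) p :
  wt (pt e1) + wt (pt e2) - wdiag <= wt p ->
  mul_coef e1 e2 p - mul_coef e2 e1 p =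
  (add_sub (pt e1) (pt e2) 1 == p)%:R * kdet e1 e2.
Proof.
move=> hp; rewrite mul_coef_top // mul_coef_top; last by rewrite (addrC (wt (pt e2))).
by rewrite (add_subC (pt e2)) (add_subC (pt e2)) /kdet; ring.
Qed.

Lemma mem_supp_ell (P : Wl K) p :
  (p \in supp_ell P) = (psi l P p.1 p.2 != 0) && (wt p == vval P).
Proof. by rewrite /supp_ell mem_filter mem_supp andbC. Qed.

Lemma vval_spec {P : Wl K} : supp l P != [::] ->
  (forall q, q \in supp l P -> wt q <= vval P) /\
  exists2 q, q \in supp l P & wt q = vval P.
Proof. by rewrite /vval; case: (supp l P) => // x s _; exact: foldr_max_spec. Qed.

Lemma vval_eq {P : Wl K} {v u} : u \in supp l P -> wt u = v ->
  (forall q, q \in supp l P -> wt q <= v) -> vval P = v.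
Proof.
move=> hu hwu hle; have hP : supp l P != [::] by case: (supp l P) hu.
have [hmax [q hq hqv]] := vval_spec hP.
by apply/eqP; rewrite eq_le -hqv hle //= -hwu hqv hmax.
Qed.

Lemma mem_supp_pt {P : Wl K} {p} :
  p \in supp l P -> exists2 e, e \in keys P & pt e = p.
Proof.
rewrite /supp mem_undup => /mapP [m]; rewrite mem_filter => /andP [_ hm] ->.
by exists m.1; rewrite ?mem_undup ?map_f.
Qed.

Lemma coef_wt_le {P : Wl K} {e} :
  supp l P != [::] -> coef P e != 0 -> wt (pt e) <= vval P.
Proof. by move=> hP he; apply: (vval_spec hP).1; rewrite mem_supp psi_pt. Qed.

Lemma supp_ell_neq0 {P : Wl K} : supp l P != [::] -> supp_ell P != [::].
Proof.
move=> hP; have [_ [q hq hwq]] := vval_spec hP.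
have : q \in supp_ell P by rewrite mem_supp_ell -mem_supp hq hwq eqxx.
by case: (supp_ell P).
Qed.

Lemma supp_ell_sub {P : Wl K} : {subset supp_ell P <= supp l P}.
Proof. by move=> p; rewrite mem_filter => /andP []. Qed.

Section Extremal.
Variables f g : rat * rat -> rat.
Hypothesis fg_inj : forall x y, f x = f y -> g x = g y -> x = y.
Hypothesis f_wt_inj : forall x y, f x = f y -> wt x = wt y -> x = y.
Hypothesis f_add_sub1 : forall x y, f (add_sub x y 1) = f x + f y.
Local Notation best P := (pick_best (better_lex f g) (supp_ell P)).

Lemma best_spec {P : Wl K} : supp l P != [::] ->
  best P \in supp_ell P /\
  forall q, q \in supp_ell P -> q = best P \/ f q < f (best P).
Proof.
move=> hP; have [hb hmax] := @pick_best_spec f g fg_inj _ (supp_ell_neq0 hP).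
split=> // q hq; case: (hmax q hq) => [->|]; first by left.
rewrite /better_lex => /orP [|/andP [/eqP hf _]]; first by right.
left; apply: f_wt_inj => //.
by move: hq hb; rewrite !mem_supp_ell => /andP [_ /eqP ->] /andP [_ /eqP ->].
Qed.

Section Commutator.
Variables P Q : Wl K.
Hypotheses (hP : supp l P != [::]) (hQ : supp l Q != [::]).
Local Notation vtop := (vval P + vval Q - wdiag).
Local Notation C := (commW l P Q).
Local Notation u := (add_sub (best P) (best Q) 1).

Lemma psi_commW_top p : vtop <= wt p -> psi l C p.1 p.2 =
  \sum_(e1 <- keys P) \sum_(e2 <- keys Q)
     coef P e1 * coef Q e2 * ((add_sub (pt e1) (pt e2) 1 == p)%:R * kdet e1 e2).
Proof.
move=> hp; rewrite psi_commW; apply: eq_bigr => e1 _; apply: eq_bigr => e2 _.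
have [->|h1] := eqVneq (coef P e1) 0; first by rewrite !mul0r.
have [->|h2] := eqVneq (coef Q e2) 0; first by rewrite mulr0 !mul0r.
rewrite mul_coef_commutator_top //; apply: le_trans hp.
by rewrite lerD2r lerD // coef_wt_le.
Qed.

Lemma top_pair_leading {e1 e2 : key} : coef P e1 != 0 -> coef Q e2 != 0 ->
  vtop <= wt (add_sub (pt e1) (pt e2) 1) ->
  [/\ wt (add_sub (pt e1) (pt e2) 1) = vtop,
      pt e1 \in supp_ell P & pt e2 \in supp_ell Q].
Proof.
move=> h1 h2; have b1 := coef_wt_le hP h1; have b2 := coef_wt_le hQ h2.
rewrite wt_add_sub mul1r => hv.
have w1 : wt (pt e1) = vval P by lra.
have w2 : wt (pt e2) = vval Q by lra.
by rewrite !mem_supp_ell !psi_pt h1 h2 w1 w2 !eqxx.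
Qed.

Lemma top_pair_dominated {e1 e2 : key} : coef P e1 != 0 -> coef Q e2 != 0 ->
  vtop <= wt (add_sub (pt e1) (pt e2) 1) ->
  (pt e1 = best P /\ pt e2 = best Q) \/ f (add_sub (pt e1) (pt e2) 1) < f u.
Proof.
move=> h1 h2 /(top_pair_leading h1 h2).
move=> [_ /(best_spec hP).2 o1 /(best_spec hQ).2 o2]; rewrite !f_add_sub1.
case: o1 => o1; case: o2 => o2; first by left.
- by right; rewrite o1 ltrD2l.
- by right; rewrite o2 ltrD2r.
- by right; rewrite ltrD.
Qed.

Lemma psi_commW_gt p : vtop < wt p -> psi l C p.1 p.2 = 0.
Proof.
move=> hp; rewrite psi_commW_top ?ltW //.
rewrite big1_seq // => e1 _; rewrite big1_seq // => e2 _.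
have [->|h1] := eqVneq (coef P e1) 0; first by rewrite !mul0r.
have [->|h2] := eqVneq (coef Q e2) 0; first by rewrite mulr0 !mul0r.
case: eqP => [he|_]; last by rewrite mul0r mulr0.
move: hp; rewrite -he => hp.
by have [hw _ _] := top_pair_leading h1 h2 (ltW hp); rewrite hw ltxx in hp.
Qed.

Lemma wt_best_pair : wt u = vtop.
Proof.
have [+ _] := best_spec hP; have [+ _] := best_spec hQ.
by rewrite !mem_supp_ell wt_add_sub mul1r => /andP [_ /eqP ->] /andP [_ /eqP ->].
Qed.

Lemma psi_commW_best {ks kt : key} : ks \in keys P -> kt \in keys Q ->
  pt ks = best P -> pt kt = best Q ->
  psi l C u.1 u.2 = coef P ks * coef Q kt * kdet ks kt.
Proof.
move=> hks hkt eks ekt.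
pose term e1 e2 :=
  coef P e1 * coef Q e2 * ((add_sub (pt e1) (pt e2) 1 == u)%:R * kdet e1 e2).
have only_best e1 e2 : term e1 e2 != 0 -> e1 = ks /\ e2 = kt.
  rewrite /term; have [->|h1] := eqVneq (coef P e1) 0; first by rewrite !mul0r eqxx.
  have [->|h2] := eqVneq (coef Q e2) 0; first by rewrite mulr0 !mul0r eqxx.
  have [he _|] := eqVneq (add_sub (pt e1) (pt e2) 1) u; last first.
    by rewrite -[false%:R]/(0 : K) mul0r mulr0 eqxx.
  have hv : vtop <= wt (add_sub (pt e1) (pt e2) 1) by rewrite he wt_best_pair.
  case: (top_pair_dominated h1 h2 hv) => [[E1 E2]|]; last by rewrite he ltxx.
  by split; apply: pt_inj; rewrite ?E1 ?E2 ?eks ?ekt.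
rewrite psi_commW_top ?wt_best_pair //.
rewrite (bigD1_seq ks) ?undup_uniq //= (bigD1_seq kt) ?undup_uniq //=.
rewrite [X in _ + X + _]big1_seq ?addr0; last first.
  move=> e2 /andP [hne _]; apply/eqP; apply: contraR hne => /only_best [_ ->].
  by rewrite eqxx.
rewrite [X in _ + X]big1_seq ?addr0; last first.
  move=> e1 /andP [hne _]; apply: big1_seq => e2 _; apply/eqP.
  by apply: contraR hne => /only_best [-> _]; rewrite eqxx.
by rewrite eks ekt eqxx mul1r.
Qed.

Lemma psi_commW_top_dominated {p} : vtop <= wt p -> psi l C p.1 p.2 != 0 ->
  p = u \/ f p < f u.
Proof.
move=> hp; rewrite psi_commW_top //.
move=> /sumr_neq0_has/hasP [e1 _ /sumr_neq0_has/hasP [e2 _ hne]].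
have h1 : coef P e1 != 0 by apply: contraNneq hne => ->; rewrite !mul0r.
have h2 : coef Q e2 != 0 by apply: contraNneq hne => ->; rewrite mulr0 !mul0r.
have he : add_sub (pt e1) (pt e2) 1 = p.
  by apply/eqP; apply: contraNT hne => /negbTE ->; rewrite mul0r mulr0.
rewrite -he in hp *; case: (top_pair_dominated h1 h2 hp) => [[-> ->]|]; by [left|right].
Qed.

Section Bracket.
Variable R : Wl K.
Hypothesis hbr : forall a b, brk l rho sigma P Q a b = ell l rho sigma R a b.
Hypothesis hal : ~~ aligned (best P) (best Q).

Lemma psi_commW_best_neq0 : psi l C u.1 u.2 != 0.
Proof.
have sP := supp_ell_sub _ (best_spec hP).1.
have sQ := supp_ell_sub _ (best_spec hQ).1.
have [ks hks eks] := mem_supp_pt sP; have [kt hkt ekt] := mem_supp_pt sQ.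
rewrite (psi_commW_best hks hkt eks ekt) !mulf_neq0 ?kdet_neq0 ?eks ?ekt //.
- by rewrite -psi_pt eks -mem_supp.
- by rewrite -psi_pt ekt -mem_supp.
Qed.

Lemma vval_commW : vval C = vtop.
Proof.
have hu : u \in supp l C by rewrite mem_supp psi_commW_best_neq0.
apply: (vval_eq hu wt_best_pair) => q; rewrite leNgt; apply: contraTN.
by rewrite mem_supp => /psi_commW_gt ->; rewrite eqxx.
Qed.

(* v([P,Q]) = v(P) + v(Q) - (rho+sigma), so the bracket is not truncated to 0. *)
Lemma mem_supp_ell_bracket p :
  (p \in supp_ell R) = (psi l C p.1 p.2 != 0) && (wt p == vtop).
Proof.
have hu : u \in supp l C by rewrite mem_supp psi_commW_best_neq0.
have hell a b : ell l rho sigma R a b = ell l rho sigma C a b.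
  rewrite -hbr /brk vval_commW /wdiag ltxx orbF.
  by case: (supp l C) hu.
have -> : (p \in supp_ell R) = (ell l rho sigma R p.1 p.2 != 0).
  rewrite mem_supp_ell /ell -surjective_pairing.
  by case: (wt p == vval R); rewrite ?andbT ?andbF ?eqxx.
rewrite hell /ell -surjective_pairing vval_commW.
by case: (wt p == vtop); rewrite ?andbT ?andbF ?eqxx.
Qed.

Theorem best_commutator : u = best R.
Proof.
have uR : u \in supp_ell R.
  by rewrite mem_supp_ell_bracket psi_commW_best_neq0 wt_best_pair eqxx.
have neR : supp_ell R != [::] by case: (supp_ell R) uR.
have [hr hmax] := @pick_best_spec f g fg_inj _ neR.
move: hr; rewrite mem_supp_ell_bracket => /andP [hpr /eqP hwr].
have hv : vtop <= wt (best R) by rewrite hwr.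
have [<-//|hlt] := psi_commW_top_dominated hv hpr.
case: (hmax u uR) => [->//|/better_lex_le hle].
by move: (lt_le_trans hlt hle); rewrite ltxx.
Qed.

End Bracket.
End Commutator.

End Extremal.

End Weight.

End Coefficients.

Lemma wt_diag_inj (rho sigma : int) (x y : rat * rat) : 0 < rho + sigma ->
  x.1 - x.2 = y.1 - y.2 -> wt rho sigma x = wt rho sigma y -> x = y.
Proof.
move=> hc hd hw; have ha : x.1 = y.1.
  have : (x.1 - y.1) * (rho + sigma)%:~R = 0.
    rewrite [LHS](_ : _ = wt rho sigma x - wt rho sigma y
                          + sigma%:~R * ((x.1 - x.2) - (y.1 - y.2))).
      by rewrite hd hw !subrr mulr0 addr0.
    by rewrite /wt intrD; ring.
  by move/eqP; rewrite mulf_eq0 intr_eq0 (gt_eqF hc) orbF subr_eq0 => /eqP.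
by move: x y hd ha {hw} => [a b] [a' b'] /= hd ha; congr pair => //; lra.
Qed.

Theorem proposition2p4 (K : fieldType) (hK : [pchar K] =i pred0)
  (l : nat) (hl : (0 < l)%N) (P Q R : Wl K) (rho sigma : int)
  (hV : inV rho sigma) (hs : sigma <= 0)
  (hP : supp l P != [::]) (hQ : supp l Q != [::]) (hR : supp l R != [::])
  (hbr : forall a b : rat, brk l rho sigma P Q a b = ell l rho sigma R a b) :
  (~~ aligned (st l rho sigma P) (st l rho sigma Q) ->
     ((st l rho sigma P).1 + (st l rho sigma Q).1 - 1,
      (st l rho sigma P).2 + (st l rho sigma Q).2 - 1) = st l rho sigma R) /\
  (~~ aligned (en l rho sigma P) (en l rho sigma Q) ->
     ((en l rho sigma P).1 + (en l rho sigma Q).1 - 1,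
      (en l rho sigma P).2 + (en l rho sigma Q).2 - 1) = en l rho sigma R).
Proof.
have hc : 0 < rho + sigma by case/andP: hV.
split=> hal.
- apply: (@best_commutator K hK l hl rho sigma hc
            (fun x => x.1 - x.2) (fun x => x.1)) => //= [x y||x y].
  + by case: x y => [a b] [a' b'] /= hd ha; congr pair => //; lra.
  + by move=> x y; exact: wt_diag_inj.
  + by rewrite /add_sub /=; ring.
- apply: (@best_commutator K hK l hl rho sigma hc
            (fun x => x.2 - x.1) (fun x => x.2)) => //= [x y|x y hd|x y].
  + by case: x y => [a b] [a' b'] /= hd hb; congr pair => //; lra.
  + by apply: wt_diag_inj; rewrite // -opprB hd opprB.
  + by rewrite /add_sub /=; ring.
Qed.
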